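(* Let $N,M,m\in\mathbb{N}$ with $M\geq 3$, and let $T:\mathbb{C}^N\times\cdots\times\mathbb{C}^N\to\mathbb{C}$ be an $m$-linear form, where each copy of $\mathbb{C}^N$ carries the sup norm. Let $\|T\|=\sup\{|T(x^{(1)},\ldots,x^{(m)})|:\|x^{(i)}\|_\infty\leq 1,\ 1\le i\le m\}$ and $\|T\|_M=\sup\{|T(x^{(1)},\ldots,x^{(m)})|: x^{(1)},\ldots,x^{(m)}\in D_M^N\}$. Then $$\|T\|_M\leq \|T\|\leq r_M^{-m}\|T\|_M.$$
   Context: $T_M=\{\exp(2j\pi i/M): j=0,\ldots,M-1\}$ is the set of $M$th roots of unity, $D_M=\operatorname{conv}(T_M)\subset\mathbb{C}$, $D_M^N=D_M\times\cdots\times D_M$ ($N$ factors), and $r_M=\left(\frac12+\frac12\cos\left(\frac{2\pi}{M}\right)\right)^{1/2}$. *)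

From HB Require Import structures.
From mathcomp Require Import all_boot all_order all_algebra.
From mathcomp Require Import complex.
From mathcomp Require Import all_classical all_reals.
From mathcomp Require Import trigo.
Set Implicit Arguments. Unset Strict Implicit. Unset Printing Implicit Defensive.
Import Order.TTheory GRing.Theory Num.Theory.
Local Open Scope ring_scope.
Local Open Scope classical_set_scope.

Section Defs.
Variable R : realType.
Local Notation C := R[i].
Local Notation normc := (@ComplexField.Normc.normc R).

Definition supnorm (N : nat) (x : 'I_N -> C) : R := \big[Num.max/0]_(k < N) normc (x k).

Definition upd (N m : nat) (x : 'I_m -> 'I_N -> C) (i : 'I_m) (y : 'I_N -> C) :
  'I_m -> 'I_N -> C := fun j => if j == i then y else x j.

Definition multilinear (N m : nat) (T : ('I_m -> 'I_N -> C) -> C) : Prop :=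
  forall (x : 'I_m -> 'I_N -> C) (i : 'I_m) (a : C) (y z : 'I_N -> C),
    T (upd x i (fun k => a * y k + z k)) = a * T (upd x i y) + T (upd x i z).

Definition root_unity (M j : nat) : C :=
  Complex (cos (2 * pi * j%:R / M%:R)) (sin (2 * pi * j%:R / M%:R)).

Definition T_M (M : nat) : set C := [set root_unity M j | j in [set j : nat | (j < M)%N]].

(* D_M = convex hull of T_M: convex combinations of the M roots of unity *)
Definition D_M (M : nat) : set C :=
  [set z | exists lam : 'I_M -> R, (forall j, 0 <= lam j) /\ \sum_(j < M) lam j = 1 /\
     z = \sum_(j < M) (Complex (lam j) 0) * root_unity M j].

Definition r_M (M : nat) : R := Num.sqrt (2^-1 + 2^-1 * cos (2 * pi / M%:R)).

Definition opnorm (N m : nat) (T : ('I_m -> 'I_N -> C) -> C) : R :=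
  sup [set normc (T x) | x in [set x : 'I_m -> 'I_N -> C | forall i, supnorm (x i) <= 1]].

Definition opnorm_M (M N m : nat) (T : ('I_m -> 'I_N -> C) -> C) : R :=
  sup [set normc (T x) | x in [set x : 'I_m -> 'I_N -> C | forall i k, D_M M (x i k)]].

End Defs.

From HB Require Import structures.
From mathcomp Require Import all_boot all_order all_algebra.
From mathcomp Require Import complex.
From mathcomp Require Import all_classical all_reals.
From mathcomp Require Import trigo.
From mathcomp Require Import ring lra.
Set Implicit Arguments. Unset Strict Implicit. Unset Printing Implicit Defensive.
Import Order.TTheory GRing.Theory Num.Theory.
Local Open Scope ring_scope.
Local Open Scope complex_scope.
Local Notation normc := ComplexField.Normc.normc.

(** The lower bound holds because D_M lies in the closed unit disc.  For the
   upper bound, D_M is the regular M-gon inscribed in the unit circle, whose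
   inradius is r_M = cos (pi / M): if the angle t lies between the angles of two
   consecutive vertices w_j and w_(j+1), then r_M e^(it) = s w_j + u w_(j+1) with
   s, u >= 0 and s + u <= 1, and the missing mass 1 - s - u can be spread evenly
   over all vertices since they sum to 0.  Hence r_M x lies in (D_M^N)^m whenever
   every x_i has sup norm at most 1, and m-homogeneity gives
   r_M^m |T(x)| = |T(r_M x)| <= ||T||_M. *)
Section ComplexExponential.
Variable R : realType.
Local Notation C := R[i].

Definition expi (t : R) : C := Complex (cos t) (sin t).

Lemma expi0 : expi 0 = 1.
Proof. by rewrite /expi cos0 sin0. Qed.

Lemma expiD s t : expi (s + t) = expi s * expi t.
Proof. by rewrite /expi /= cosD sinD; congr Complex; ring. Qed.

Lemma expiMn t n : expi (t *+ n) = expi t ^+ n.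
Proof. by elim: n => [|n IH]; rewrite ?expi0 // mulrS expiD IH exprS. Qed.

Lemma expi2pi : expi (pi *+ 2) = 1.
Proof. by rewrite /expi cos2pi sin2pi. Qed.

Lemma normc_expi t : normc (expi t) = 1.
Proof. by rewrite /= cos2Dsin2 sqrtr1. Qed.

Lemma normc_normr (z : C) : (normc z)%:C = `|z|.
Proof. by []. Qed.

Lemma normc_ge0 (z : C) : 0 <= normc z.
Proof. by case: z => a b; apply: sqrtr_ge0. Qed.

Lemma normc_real (x : R) : 0 <= x -> normc x%:C = x.
Proof. by move=> x_ge0; rewrite /= expr0n addr0 sqrtr_sqr ger0_norm. Qed.

Lemma normcX (z : C) n : normc (z ^+ n) = normc z ^+ n.
Proof.
elim: n => [|n IH]; first exact: ComplexField.Normc.normc1.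
by rewrite !exprS ComplexField.Normc.normcM IH.
Qed.

Lemma unit_circle_angle (a b : R) : a ^+ 2 + b ^+ 2 = 1 ->
  exists2 t, 0 <= t <= pi *+ 2 & a = cos t /\ b = sin t.
Proof.
move=> ab1; have a_bound : -1 <= a <= 1 by apply/andP; split; nra.
have a_itv : a \in `[-1, 1] by rewrite in_itv.
have sin_acosE : sin (acos a) = `|b|.
  by rewrite sin_acos // (_ : 1 - a ^+ 2 = b ^+ 2) ?sqrtr_sqr //; lra.
have := acos_ge0 a_bound; have := acos_lepi a_bound; have := pi_gt0 R.
rewrite mulr2n => pi_gt0 acos_le acos_ge.
have [b_ge0|b_lt0] := lerP 0 b.
  exists (acos a); first by apply/andP; split; lra.
  by rewrite acosK // sin_acosE ger0_norm.
exists (pi + pi - acos a); first by apply/andP; split; lra.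
rewrite -mulr2n cosB sinB cos2pi sin2pi acosK // sin_acosE ltr0_norm //.
by split; ring.
Qed.

Lemma polar_expi (z : C) : exists2 t, 0 <= t <= pi *+ 2 & z = (normc z)%:C * expi t.
Proof.
case: z => a b; set rho := normc (a +i* b).
have rho2 : rho ^+ 2 = a ^+ 2 + b ^+ 2 by rewrite sqr_sqrtr // addr_ge0 // sqr_ge0.
have [rho0|rho_neq0] := eqVneq rho 0.
  have [-> ->] : a = 0 /\ b = 0 by move: rho2; rewrite rho0; split; nra.
  exists 0; first by rewrite lexx mulrn_wge0 // pi_ge0.
  by rewrite rho0 mul0r.
have [t t_itv [aE bE]] : exists2 t, 0 <= t <= pi *+ 2 & a / rho = cos t /\ b / rho = sin t.
  by apply: unit_circle_angle; rewrite !expr_div_n -mulrDl -rho2 divff // expf_neq0.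
exists t => //; rewrite /expi -aE -bE; simpc.
by rewrite !(mulrC rho) !divfK.
Qed.

Lemma chord_expi (b p : R) : sin b != 0 ->
  (cos b)%:C * expi (b + p)
  = (sin (b - p) / (2 * sin b))%:C + (sin (b + p) / (2 * sin b))%:C * expi (b *+ 2).
Proof.
move=> sin_b_neq0; rewrite /expi; simpc.
rewrite sin_mulr2n cos_mulr2n sinB !(sinD, cosD); congr (_ +i* _); last by field.
apply/eqP; rewrite -subr_eq0; apply/eqP.
(* The real parts agree only modulo [cos b ^+ 2 + sin b ^+ 2 = 1]. *)
transitivity (cos b * sin p / sin b * (1 - (cos b ^+ 2 + sin b ^+ 2))); first by field.
by rewrite cos2Dsin2 subrr mulr0.
Qed.

End ComplexExponential.

Section RootsOfUnity.
Variables (R : realType) (M : nat).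
Local Notation C := R[i].
Local Notation omega := (root_unity R M).

Lemma root_unityE j : omega j = expi (2 * pi / M%:R) ^+ j.
Proof.
by rewrite -expiMn /root_unity (_ : 2 * pi * j%:R / M%:R = 2 * pi / M%:R *+ j) //; ring.
Qed.

Lemma normc_root_unity j : normc (omega j) = 1.
Proof. exact: normc_expi. Qed.

Hypothesis M_gt1 : (1 < M)%N.

Let M_gt0 : (0 < M)%N. Proof. exact: ltnW. Qed.

Lemma root_unity_mod j : omega (j %% M) = omega j.
Proof.
rewrite !root_unityE expr_mod // -expiMn (_ : 2 * pi / M%:R *+ M = pi *+ 2) ?expi2pi //.
by field; rewrite pnatr_eq0 -lt0n.
Qed.

Lemma sum_root_unity : \sum_(j < M) omega j = 0.
Proof.
set w : C := expi (2 * pi / M%:R).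
have w_neq1 : w != 1.
  have M_ge2 : (2%:R : R) <= M%:R by rewrite ler_nat.
  have step_gt0 : 0 < 2 * pi / M%:R :> R by rewrite divr_gt0 ?mulr_gt0 ?pi_gt0 ?ltr0n.
  have step_le_pi : 2 * pi / M%:R <= pi :> R.
    by rewrite ler_pdivrMr ?ltr0n // mulrC ler_wpM2l ?pi_ge0.
  apply/eqP => -[cos_step _]; move: (step_gt0).
  rewrite -(@ltr_cos R) ?in_itv /= ?lexx ?pi_ge0 ?(ltW step_gt0) // cos0 cos_step.
  by rewrite ltxx.
have wM : w ^+ M = 1 by rewrite -root_unityE -root_unity_mod modnn root_unityE.
have := subrX1 w M; rewrite wM subrr => /esym/eqP.
rewrite mulf_eq0 subr_eq0 (negbTE w_neq1) => /eqP.
by under eq_bigr do rewrite -root_unityE.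
Qed.

End RootsOfUnity.

Section RegularPolygon.
Variables (R : realType) (M : nat).
Local Notation C := R[i].
Local Notation omega := (root_unity R M).

Lemma D_M_normc_le1 (z : C) : D_M M z -> normc z <= 1.
Proof.
case=> lam [lam_ge0 [lam_sum1 ->]]; rewrite -(lecR _ 1) normc_normr.
apply: le_trans (ler_norm_sum _ _ _) _.
rewrite -lam_sum1 rmorph_sum (eq_bigr (fun j => (lam j)%:C)) // => j _.
by rewrite normrM -!normc_normr normc_root_unity normc_real ?mulr1.
Qed.

Hypothesis M_gt1 : (1 < M)%N.

Lemma D_M_subconvex (lam : 'I_M -> R) : (forall j, 0 <= lam j) -> \sum_j lam j <= 1 ->
  D_M M (\sum_j (lam j)%:C * omega j).
Proof.
move=> lam_ge0 lam_sum_le1.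
have M_gt0 : 0 < M%:R :> R by rewrite ltr0n ltnW.
pose c := (1 - \sum_j lam j) / M%:R.
have c_ge0 : 0 <= c by rewrite divr_ge0 ?subr_ge0 // ltW.
exists (fun j => lam j + c); split; first by move=> j; rewrite addr_ge0.
split; first by rewrite big_split /= sumr_const card_ord -mulr_natr divfK ?gt_eqF //; ring.
rewrite [RHS](eq_bigr (fun j => (lam j)%:C * omega j + c%:C * omega j)); last first.
  by move=> j _; rewrite -mulrDl -rmorphD.
by rewrite big_split /= -mulr_sumr sum_root_unity // mulr0 addr0.
Qed.

Lemma D_M_two_vertices (s u : R) (j k : 'I_M) : 0 <= s -> 0 <= u -> s + u <= 1 ->
  D_M M (s%:C * omega j + u%:C * omega k).
Proof.
move=> s_ge0 u_ge0 su_le1.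
pose lam i := (if i == j then s else 0) + (if i == k then u else 0).
have lam_vertices i : (lam i)%:C * omega i
    = (if i == j then s%:C * omega j else 0) + (if i == k then u%:C * omega k else 0).
  by rewrite rmorphD mulrDl; congr (_ + _); case: eqP => [->|_]; rewrite ?rmorph0 ?mul0r.
have -> : s%:C * omega j + u%:C * omega k = \sum_i (lam i)%:C * omega i.
  by rewrite (eq_bigr _ (fun i _ => lam_vertices i)) big_split /= -!big_mkcond !big_pred1_eq.
apply: D_M_subconvex => [i|]; first by rewrite addr_ge0 //; case: eqP.
by rewrite big_split /= -!big_mkcond !big_pred1_eq.
Qed.

End RegularPolygon.

Lemma sector_cover (R : realDomainType) (d t : R) n : (0 < n)%N ->
  0 <= t <= n%:R * d -> exists2 j, (j < n)%N & j%:R * d <= t <= j.+1%:R * d.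
Proof.
elim: n => [//|n IH] _ /andP[t_ge0 t_le].
case: n IH t_le => [_|n IH] t_le; first by exists 0%N; rewrite // mul0r t_ge0.
have [t_le_n|t_gt_n] := lerP t (n.+1%:R * d).
  have t_itv : 0 <= t <= n.+1%:R * d by rewrite t_ge0.
  by have [j j_lt_n j_itv] := IH isT t_itv; exists j => //; apply: ltnW.
by exists n.+1 => //; rewrite t_le ltW.
Qed.

Section InscribedDisc.
Variables (R : realType) (M : nat).
Hypothesis M_gt2 : (2 < M)%N.
Local Notation omega := (root_unity R M).
Let beta : R := pi / M%:R.

Let M_gt1 : (1 < M)%N. Proof. exact: ltnW. Qed.
Let M_gt0 : 0 < M%:R :> R. Proof. by rewrite ltr0n ltnW. Qed.
Let beta_gt0 : 0 < beta. Proof. by rewrite divr_gt0 ?pi_gt0. Qed.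
Let beta_le_pi3 : beta *+ 3 <= pi.
Proof.
rewrite /beta (_ : pi / M%:R *+ 3 = pi * 3%:R / M%:R); last by ring.
by rewrite ler_pdivrMr // ler_wpM2l ?pi_ge0 // ler_nat.
Qed.
Let sin_beta_gt0 : 0 < sin beta.
Proof.
apply: sin_gt0_pi; apply/andP; split => //.
by move: beta_le_pi3 beta_gt0; rewrite mulrS mulr2n; lra.
Qed.
Let cos_beta_gt0 : 0 < cos beta.
Proof.
apply: cos_gt0_pihalf; apply/andP.
by move: beta_le_pi3 beta_gt0; rewrite mulrS mulr2n; split; lra.
Qed.

Lemma r_M_cos : r_M R M = cos (pi / M%:R).
Proof.
rewrite /r_M (_ : 2 * pi / M%:R = beta + beta) ?cosD; last by rewrite /beta; ring.
rewrite -!expr2 sin2cos2 (_ : 2^-1 + _ = cos beta ^+ 2); last by field.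
by rewrite sqrtr_sqr gtr0_norm.
Qed.

Lemma r_M_gt0 : 0 < r_M R M.
Proof. by rewrite r_M_cos. Qed.

Lemma r_M_expi_in_sector (t : R) j :
  j%:R * (beta *+ 2) <= t <= j.+1%:R * (beta *+ 2) ->
  exists s u, [/\ 0 <= s, 0 <= u, s + u <= 1 &
    (r_M R M)%:C * expi t = s%:C * omega j + u%:C * omega j.+1].
Proof.
move=> /andP[t_ge t_le]; set p := t - j%:R * (beta *+ 2) - beta.
have [p_ge p_le] : - beta <= p /\ p <= beta.
  by move: t_le; rewrite -natr1 /p => t_le; split; lra.
have tE : t = j%:R * (beta *+ 2) + (beta + p) by rewrite /p; ring.
clearbody p.
have sin_ge0 x : - beta <= x -> x <= beta -> 0 <= sin (beta + x).
  move=> x_ge x_le; apply: sin_ge0_pi; apply/andP.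
  by move: beta_le_pi3; rewrite mulrS mulr2n; split; lra.
exists (sin (beta - p) / (2 * sin beta)), (sin (beta + p) / (2 * sin beta)); split.
- by rewrite divr_ge0 ?mulr_ge0 ?(ltW sin_beta_gt0) ?sin_ge0 //; lra.
- by rewrite divr_ge0 ?mulr_ge0 ?(ltW sin_beta_gt0) ?sin_ge0.
- rewrite (_ : sin (beta - p) / _ + _ = cos p) ?cos_le1 //.
  by rewrite sinB sinD; field; rewrite gt_eqF.
have omegaE k : omega k = expi (k%:R * (beta *+ 2)).
  by rewrite /root_unity /expi (_ : 2 * pi * k%:R / M%:R = k%:R * (beta *+ 2)) // /beta; ring.
rewrite r_M_cos -/beta tE !omegaE.
rewrite (_ : j.+1%:R * _ = j%:R * (beta *+ 2) + beta *+ 2); last by rewrite -natr1; ring.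
by rewrite !(expiD (j%:R * _)) mulrCA chord_expi ?gt_eqF //; ring.
Qed.

Lemma D_M_inscribed_disc w : normc w <= 1 -> D_M M ((r_M R M)%:C * w).
Proof.
move=> w_le1; have [t t_itv ->] := polar_expi w.
have [j j_lt_M t_sector] :
    exists2 j, (j < M)%N & j%:R * (beta *+ 2) <= t <= j.+1%:R * (beta *+ 2).
  apply: sector_cover; first exact: ltnW.
  rewrite (_ : M%:R * (beta *+ 2) = pi *+ 2) // /beta.
  by field; rewrite gt_eqF.
have [s [u [s_ge0 u_ge0 su_le1 r_expiE]]] := r_M_expi_in_sector t_sector.
rewrite mulrCA r_expiE mulrDr !mulrA -!rmorphM -(root_unity_mod R M_gt1 j.+1).
have rho_ge0 := normc_ge0 w.
apply: (D_M_two_vertices M_gt1 (Ordinal j_lt_M) (Ordinal (ltn_pmod j.+1 (ltnW M_gt1)))).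
- exact: mulr_ge0.
- exact: mulr_ge0.
by rewrite -mulrDr mulr_ile1 ?addr_ge0.
Qed.

End InscribedDisc.

Section Multilinear.
Variables (R : realType) (N m : nat) (T : ('I_m -> 'I_N -> R[i]) -> R[i]).
Implicit Types (x : 'I_m -> 'I_N -> R[i]) (i : 'I_m) (a : R[i]).
Hypothesis T_multilinear : multilinear T.

Lemma upd_id x i : upd x i (x i) = x.
Proof. by apply: funext => j; rewrite /upd; case: eqP => [->|]. Qed.

Lemma multilinear0 x i : T (upd x i (fun _ => 0)) = 0.
Proof.
have := T_multilinear x i 1 (fun _ => 0) (fun _ => 0).
rewrite !mul1r add0r => T0_double.
by apply: (addrI (T (upd x i (fun _ => 0)))); rewrite addr0 -T0_double.
Qed.

Lemma multilinearZ x i a : T (upd x i (fun k => a * x i k)) = a * T x.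
Proof.
have := T_multilinear x i a (x i) (fun _ => 0).
rewrite multilinear0 addr0 upd_id => <-; congr (T (upd x i _)).
by apply: funext => k; rewrite addr0.
Qed.

Definition scale_prefix a n x : 'I_m -> 'I_N -> R[i] :=
  fun i k => if (i < n)%N then a * x i k else x i k.

Lemma multilinear_scale_prefix a x n :
  (n <= m)%N -> T (scale_prefix a n x) = a ^+ n * T x.
Proof.
elim: n => [_|n IH n_lt_m]; first by rewrite expr0 mul1r; congr T.
set y := scale_prefix a n x.
have -> : scale_prefix a n.+1 x = upd y (Ordinal n_lt_m) (fun k => a * y (Ordinal n_lt_m) k).
  apply: funext => i; apply: funext => k.
  rewrite /y /upd /scale_prefix ltnS leq_eqVlt -[(i == n :> nat)]/(i == Ordinal n_lt_m).
  by case: eqP => [->|_] /=; rewrite ?ltnn.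
by rewrite multilinearZ /y IH ?exprS ?mulrA // ltnW.
Qed.

Lemma multilinear_scale a x : T (fun i k => a * x i k) = a ^+ m * T x.
Proof.
rewrite -multilinear_scale_prefix //; congr T; apply: funext => i; apply: funext => k.
by rewrite /scale_prefix ltn_ord.
Qed.

End Multilinear.

Lemma sup_subset_scaled (R : realType) (A B : set R) (c : R) : 0 < c ->
  (B `<=` A)%classic -> (B !=set0)%classic -> (forall a, A a -> B (c * a)) ->
  sup B <= sup A /\ sup A <= c^-1 * sup B.
Proof.
move=> c_gt0 BA [b0 Bb0] cAB.
have le_divc a u : c * a <= u -> a <= c^-1 * u by rewrite ler_pdivlMl.
have [[ubA A_ub]|A_unbounded] := pselect (has_ubound A); last first.
  have B_unbounded : ~ has_ubound B.
    by move=> [u B_u]; apply: A_unbounded; exists (c^-1 * u) => a /cAB /B_u /le_divc.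
  (* Both suprema are then the default value 0. *)
  by rewrite !sup_out ?mulr0 // => -[].
have B_ub : has_ubound B by exists ubA => b /BA /A_ub.
split; first by apply: ge_sup; [exists b0 | move=> b /BA; apply: ub_le_sup; exists ubA].
apply: ge_sup; first by exists b0; apply: BA.
by move=> a /cAB /(ub_le_sup B_ub) /le_divc.
Qed.

Lemma supnorm_le1P (R : realType) N (y : 'I_N -> R[i]) :
  supnorm y <= 1 <-> forall k, normc (y k) <= 1.
Proof.
split=> [y_le1 k|y_le1]; last exact: bigmax_le.
exact: le_trans (le_bigmax _ _ k) y_le1.
Qed.

Theorem mainTheorem2 (R : realType) (N M m : nat) (hM : (3 <= M)%N)
  (T : ('I_m -> 'I_N -> R[i]) -> R[i]) (hT : multilinear T) :
  opnorm_M M T <= opnorm T /\ opnorm T <= (r_M R M) ^- m * opnorm_M M T.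
Proof.
have r_gt0 := r_M_gt0 R hM.
apply: sup_subset_scaled; first exact: exprn_gt0.
- move=> _ [x Dx <-]; exists x => // i.
  by apply/supnorm_le1P => k; apply: D_M_normc_le1.
- exists (normc (T (fun _ _ => 0))), (fun _ _ => 0) => // i k.
  by have := @D_M_inscribed_disc R M hM 0; rewrite mulr0 ComplexField.Normc.normc0; apply.
- move=> _ [x Bx <-]; exists (fun i k => (r_M R M)%:C * x i k).
    by move=> i k; apply: D_M_inscribed_disc => //; move/supnorm_le1P: (Bx i).
  by rewrite multilinear_scale // ComplexField.Normc.normcM normcX normc_real // ltW.
Qed.
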